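(* Let $C$ be a cycle and $T$ a shortcut tree for $C$ with respect to a length-function $\ell$ on $T\cup C$, and assume $V(C)=L(T)$, $|L(T)|\ge 3$, and $T$ has no vertex of degree $2$. Let $e_0\in E(C)$ be arbitrary. Then for any two distinct edges $e_1,e_2$ of $C$ sharing an endpoint we have $\ell(e_1)+\ell(e_2)>\ell(e_0)$. In particular $\ell(e_0)<\ell(C)/2$.
   Context: Graphs are finite, parallel edges allowed, no loops. A length-function is a map $\ell:E\to\mathbb{R}^+$ (strictly positive reals); $\ell(H)=\sum_{e\in E(H)}\ell(e)$. $\mathrm{sd}_G(A)$ is the minimum of $\ell(S)$ over connected subgraphs $S\subseteq G$ with $A\subseteq V(S)$. $L(T)$ is the set of leaves of $T$. Shortcut tree: let $H$ be a graph, $T$ a tree, both subgraphs of $T\cup H$, and $\ell$ a length-function on $T\cup H$. Then $T$ is a shortcut tree for $H$ if (SCT1) $V(T)\cap V(H)=L(T)$; (SCT2) $E(T)\cap E(H)=\emptyset$; (SCT3) $\ell(T)<\mathrm{sd}_H(L(T))$; (SCT4) for every proper subset $B\subsetneq L(T)$, $\mathrm{sd}_H(B)\le\mathrm{sd}_T(B)$. *)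

(* Finite multigraphs (parallel edges allowed, no loops). *)
From HB Require Import structures.
From mathcomp Require Import all_boot all_order all_algebra.
Set Implicit Arguments. Unset Strict Implicit. Unset Printing Implicit Defensive.
Import Order.TTheory GRing.Theory Num.Theory.

Record subgraph (V E : finType) := Subgraph { vs : {set V}; es : {set E} }.

Section Graphs.
Variables (V E : finType) (src tgt : E -> V).

Definition inc (e : E) (v : V) : bool := (src e == v) || (tgt e == v).

Definition wf (S : subgraph V E) : Prop :=
  forall e, e \in es S -> (src e \in vs S) /\ (tgt e \in vs S).

Definition subg (S H : subgraph V E) : Prop :=
  vs S \subset vs H /\ es S \subset es H.

Definition adj (S : subgraph V E) : rel V := fun x y =>
  [exists e, (e \in es S) &&
     (((src e == x) && (tgt e == y)) || ((src e == y) && (tgt e == x)))].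

Definition connected (S : subgraph V E) : Prop :=
  vs S != set0 /\
  forall x y, x \in vs S -> y \in vs S -> connect (adj S) x y.

Definition deg (S : subgraph V E) (v : V) : nat :=
  #|[set e in es S | inc e v]|.

Definition is_cycle (S : subgraph V E) : Prop :=
  wf S /\ connected S /\ forall v, v \in vs S -> deg S v = 2%N.

Definition acyclic (S : subgraph V E) : Prop :=
  forall C, wf C -> subg C S -> ~ is_cycle C.

Definition is_tree (S : subgraph V E) : Prop :=
  wf S /\ connected S /\ acyclic S.

Definition leaves (T : subgraph V E) : {set V} :=
  [set v in vs T | deg T v == 1%N].

Variable R : realFieldType.
Variable l : E -> R.

Definition len (S : subgraph V E) : R := (\sum_(e in es S) l e)%R.

Definition conn_span (H : subgraph V E) (A : {set V}) (S : subgraph V E) : Prop :=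
  wf S /\ subg S H /\ connected S /\ A \subset vs S.

Definition is_sd (H : subgraph V E) (A : {set V}) (x : R) : Prop :=
  (exists S, conn_span H A S /\ len S = x) /\
  (forall S, conn_span H A S -> (x <= len S)%R).

(* Shortcut tree T for H (with sd given by is_sd; sd_H(A) = +oo if no
   connected subgraph of H contains A). *)
Definition shortcut_tree (T H : subgraph V E) : Prop :=
  wf T /\ wf H /\ is_tree T /\
      (* SCT1 *) vs T :&: vs H = leaves T /\
      (* SCT2 *) es T :&: es H = set0 /\
      (* SCT3 *) (forall x, is_sd H (leaves T) x -> (len T < x)%R) /\
      (* SCT4 *) (forall B : {set V}, B \proper leaves T ->
          forall y, is_sd T B y ->
          exists x, is_sd H B x /\ (x <= y)%R).

End Graphs.

(* Let e1, e2 meet at v. By SCT4 some connected S in C spanning V(C) - v is at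
   most as long as T. By SCT3, T is shorter than every connected subgraph of C
   containing V(C), in particular shorter than C - e0; so S misses v, hence S is
   the path C - v and l(C) - l(e1) - l(e2) = l(S) <= l(T) < l(C) - l(e0). The
   second claim applies the first at a vertex off e0. *)

From HB Require Import structures.
From mathcomp Require Import all_boot all_order all_algebra.
From mathcomp Require Import zify lra.
From Stdlib Require Classical_Prop.
Import Order.TTheory GRing.Theory Num.Theory.
Set Implicit Arguments. Unset Strict Implicit. Unset Printing Implicit Defensive.

Section Connectivity.
Variables (V E : finType) (src tgt : E -> V).

Lemma adj_sym G : symmetric (adj src tgt G).
Proof.
by move=> x y; apply/existsP/existsP => -[e /andP[eG H]]; exists e; rewrite eG orbC.
Qed.

Lemma adj_edge G x y : adj src tgt G x y ->
  exists2 e, e \in es G &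
    ((src e == x) && (tgt e == y)) || ((src e == y) && (tgt e == x)).
Proof. by case/existsP => e /andP[eG H]; exists e. Qed.

Lemma edge_adj G e : e \in es G -> adj src tgt G (src e) (tgt e).
Proof. by move=> eG; apply/existsP; exists e; rewrite eG !eqxx. Qed.

Lemma connect_vs G x y : wf src tgt G -> x \in vs G ->
  connect (adj src tgt G) x y -> y \in vs G.
Proof.
move=> wG xG cxy; rewrite -(closed_connect _ cxy) // => u w /adj_edge [e eG H].
have [s t] := wG e eG.
by case/orP: H => /andP[/eqP <- /eqP <-]; rewrite s t.
Qed.

Lemma connected_crossing G (X : {set V}) x y : connected src tgt G ->
  x \in vs G -> y \in vs G -> x \in X -> y \notin X ->
  exists2 e, e \in es G & (src e \in X) != (tgt e \in X).
Proof.
move=> [_ cG] xG yG xX yX.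
case: (boolP [exists e, (e \in es G) && ((src e \in X) != (tgt e \in X))]).
  by case/existsP => e /andP[]; exists e.
move/existsPn => noncross; suff : (x \in X) = (y \in X) by rewrite xX (negbTE yX).
apply: closed_connect (cG x y xG yG) => u w /adj_edge [e eG H].
move: (noncross e); rewrite eG negbK => /eqP.
by case/orP: H => /andP[/eqP <- /eqP <-].
Qed.

Definition inner_edges (G : subgraph V E) (X : {set V}) :=
  [set e in es G | (src e \in X) && (tgt e \in X)].

(* Each step adds a crossing edge, which becomes a new inner edge. *)
Lemma connected_grow G : wf src tgt G -> connected src tgt G ->
  forall k, k < #|vs G| -> exists X : {set V},
    [/\ X \subset vs G, #|X| = k.+1 & k <= #|inner_edges G X|].
Proof.
move=> wG cG; elim=> [|k IH] klt.
  have [x0 x0G] : exists x0, x0 \in vs G by apply/card_gt0P; lia.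
  by exists [set x0]; rewrite sub1set cards1.
have [X [XG cardX innerX]] := IH (ltnW klt).
have [y yG yX] : exists2 y, y \in vs G & y \notin X.
  apply/subsetPn; apply: contraL klt => /subset_leq_card; rewrite cardX; lia.
have [x xX] : exists x, x \in X by apply/card_gt0P; rewrite cardX.
have [e eG crossX] := connected_crossing cG (subsetP XG x xX) yG xX yX.
have [se te] := wG e eG.
pose w := if src e \in X then tgt e else src e.
have wX : w \notin X by rewrite /w; case: ifP crossX => [_|->]; case: (tgt e \in X).
have e_inner : e \in inner_edges G (w |: X).
  rewrite inE eG !in_setU1 /w.
  by move: crossX; case: (src e \in X); case: (tgt e \in X); rewrite ?eqxx ?orbT.
have e_outer : e \notin inner_edges G X.
  by rewrite inE eG; case: (src e \in X) crossX; case: (tgt e \in X).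
have inner_sub : e |: inner_edges G X \subset inner_edges G (w |: X).
  rewrite subUset sub1set e_inner; apply/subsetP => f; rewrite !inE.
  by case/and3P => -> -> ->; rewrite !orbT.
exists (w |: X); split.
- by rewrite subUset sub1set XG andbT /w; case: ifP.
- by rewrite cardsU1 wX cardX.
- by have := subset_leq_card inner_sub; rewrite cardsU1 e_outer; lia.
Qed.

Lemma card_vs_connected G : wf src tgt G -> connected src tgt G ->
  #|vs G| <= #|es G|.+1.
Proof.
move=> wG cG; case nG: #|vs G| => [//|n].
have [|X [_ _ innerX]] := connected_grow wG cG (k := n); first by rewrite nG.
have : inner_edges G X \subset es G by apply/subsetP => e; rewrite inE => /andP[].
by move/subset_leq_card; lia.
Qed.

End Connectivity.

Section Cycles.
Variables (V E : finType) (src tgt : E -> V).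
Hypothesis loopless : forall e, src e != tgt e.

Definition edges_at (G : subgraph V E) v := [set e in es G | inc src tgt e v].

Lemma handshake G (X : {set V}) :
  \sum_(x in X) deg src tgt G x =
  \sum_(e in es G) ((src e \in X) + (tgt e \in X)).
Proof.
have degE x : deg src tgt G x = \sum_(e in es G) ((src e == x) + (tgt e == x)).
  rewrite /deg -sum1_card big_mkcond [RHS]big_mkcond /=; apply: eq_bigr => e _.
  rewrite inE /inc; case: (e \in es G) => //=.
  by case: eqP => [<-|//]; rewrite eq_sym (negbTE (loopless e)).
rewrite (eq_bigr _ (fun x _ => degE x)) exchange_big /=.
have count_in (a : V) : \sum_(x in X) (a == x) = (a \in X) :> nat.
  rewrite big_mkcond (bigD1 a) //= eqxx big1 => [|x /negbTE]; first by case: (a \in X).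
  by rewrite eq_sym => ->; case: (x \in X).
by apply: eq_bigr => e _; rewrite big_split /= !count_in.
Qed.

Lemma cycle_card_es C : is_cycle src tgt C -> #|es C| = #|vs C|.
Proof.
move=> [wC [_ degC]]; have := handshake C (vs C).
rewrite (eq_bigr (fun=> 2)) => [|x /degC //].
rewrite [RHS](eq_bigr (fun=> 2)) => [|e /wC [-> ->] //].
by rewrite !sum_nat_const; lia.
Qed.

(* A cut separating the ends of the deleted edge would be crossed by it alone,
   so the degree sum over one side would be odd. *)
Lemma cycle_delete_edge_connected C f : is_cycle src tgt C -> f \in es C ->
  connected src tgt (Subgraph (vs C) (es C :\ f)).
Proof.
move=> [wC [[neC cC] degC]] fC; set Cf := Subgraph (vs C) (es C :\ f).
have wCf : wf src tgt Cf by move=> e /setD1P [_ /wC].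
have [sf tf] := wC f fC.
have reach_f : connect (adj src tgt Cf) (src f) (tgt f).
  apply/negPn/negP => unreach.
  set X := [set y | connect (adj src tgt Cf) (src f) y].
  have XC : X \subset vs C by apply/subsetP => y; rewrite inE; apply: connect_vs.
  have sX : src f \in X by rewrite inE connect0.
  have tX : tgt f \in X = false by rewrite inE (negbTE unreach).
  have sameX e : e \in es C :\ f -> (src e \in X) = (tgt e \in X).
    move=> eCf; rewrite !inE; apply/idP/idP => reach; apply: connect_trans reach _;
      apply: connect1; [exact: edge_adj | rewrite adj_sym; exact: edge_adj].
  have := handshake C X; rewrite (eq_bigr (fun=> 2)) => [|x /(subsetP XC) /degC //].
  rewrite (big_setD1 f fC) /= sX tX (eq_bigr (fun e => (src e \in X) * 2)); last first.
    by move=> e /sameX ->; rewrite muln2 addnn.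
  by rewrite -big_distrl sum_nat_const /=; lia.
split=> // x y xC yC; apply: connect_sub (cC x y xC yC) => u w /adj_edge [e eC uw].
case: (eqVneq e f) => [ef|nef].
  move: uw; rewrite ef; case/orP => /andP[/eqP <- /eqP <-] //.
  by rewrite (sym_connect_sym (@adj_sym _ _ _ _ _)).
by apply: connect1; apply/existsP; exists e; rewrite !inE nef eC.
Qed.

(* A connected subgraph of a cycle missing one vertex is the path left after
   deleting that vertex: it has at least #|vs C| - 2 edges, and no others exist. *)
Lemma es_cycle_minus_vertex C S v : is_cycle src tgt C -> v \in vs C ->
  wf src tgt S -> subg S C -> connected src tgt S -> vs S = vs C :\ v ->
  es S = es C :\: edges_at C v.
Proof.
move=> hC vC wS [_ SC] cS vsS; have [_ [_ degC]] := hC.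
have sub : es S \subset es C :\: edges_at C v.
  apply/subsetP => e eS; have [s t] := wS e eS.
  rewrite !inE (subsetP SC e eS) andbT /inc negb_or.
  by apply/andP; split; apply/eqP => ev; [move: s | move: t]; rewrite ev vsS setD11.
have card_sub : #|es C :\: edges_at C v| = (#|vs C| - 2)%N.
  have atC : edges_at C v \subset es C by apply/subsetP => e; rewrite inE => /andP[].
  rewrite cardsD (setIidPr atC) (cycle_card_es hC).
  by rewrite -[#|edges_at C v|]/(deg src tgt C v) degC.
have := card_vs_connected wS cS; have := cardsD1 v (vs C); rewrite vsS vC.
by move=> cardC cardS; apply/eqP; rewrite eqEcard sub card_sub /=; lia.
Qed.

Lemma cycle_edges_at C v e1 e2 : is_cycle src tgt C -> v \in vs C -> e1 != e2 ->
  e1 \in edges_at C v -> e2 \in edges_at C v -> edges_at C v = [set e1; e2].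
Proof.
move=> [_ [_ degC]] vC ne12 e1v e2v; apply/esym/eqP.
rewrite eqEcard subUset !sub1set e1v e2v cards2 ne12 /=.
by rewrite -[#|edges_at C v|]/(deg src tgt C v) degC.
Qed.

End Cycles.

Section Minimizer.
Variables (K : finType) (d : Order.disp_t) (T : orderType d).

(* Classical descent: moving to a strictly smaller value shrinks [below]. *)
Lemma ex_minimizer (P : K -> Prop) (f : K -> T) k0 : P k0 ->
  exists k, P k /\ forall k', P k' -> (f k <= f k')%O.
Proof.
pose below k := [set k' | (f k' < f k)%O].
move: {2}#|below k0|.+1 (ltnSn #|below k0|) => n; elim: n k0 => // n IH k0.
rewrite ltnS => lt_n Pk0.
have [[k [Pk lt_k]]|no_smaller] :=
  Classical_Prop.classic (exists k, P k /\ (f k < f k0)%O).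
  apply: (IH k _ Pk); apply: leq_trans _ lt_n; apply: proper_card; apply/properP; split.
    by apply/subsetP => k'; rewrite !inE => /lt_trans; apply.
  by exists k; rewrite !inE ?ltxx.
exists k0; split=> // k' Pk'; rewrite leNgt; apply/negP => lt_k'.
by apply: no_smaller; exists k'.
Qed.

End Minimizer.

Section Lengths.
Variables (R : realFieldType) (V E : finType) (src tgt : E -> V) (l : E -> R).

Lemma sd_exists H A S0 : conn_span src tgt H A S0 ->
  exists2 S, conn_span src tgt H A S & is_sd src tgt l H A (len l S).
Proof.
move=> spanS0; pose toS (k : {set V} * {set E}) := Subgraph k.1 k.2.
have [|k [spanK minK]] := ex_minimizer (fun k => len l (toS k))
  (P := fun k => conn_span src tgt H A (toS k)) (k0 := (vs S0, es S0)).
  by case: S0 spanS0.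
exists (toS k) => //; split; first by exists (toS k).
by case=> X F spanXF; apply: (minK (X, F)).
Qed.

Lemma len_split_edges_at G v e1 e2 : e1 != e2 ->
  edges_at src tgt G v = [set e1; e2] ->
  len l G = (\sum_(e in es G :\: edges_at src tgt G v) l e + (l e1 + l e2))%R.
Proof.
move=> ne12 at_v; have atG : edges_at src tgt G v \subset es G.
  by apply/subsetP => e; rewrite inE => /andP[].
rewrite /len (big_setID (edges_at src tgt G v)) (setIidPr atG) addrC.
by congr (_ + _)%R; rewrite at_v big_setU1 ?big_set1 ?inE.
Qed.

End Lengths.

Section ShortcutCycle.
Variables (R : realFieldType) (V E : finType) (src tgt : E -> V).
Hypothesis loopless : forall e, src e != tgt e.
Variables (T C : subgraph V E) (l : E -> R).
Hypotheses (hC : is_cycle src tgt C) (hT : shortcut_tree src tgt l T C)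
  (hVC : vs C = leaves src tgt T).

Lemma len_tree_lt_span S : conn_span src tgt C (leaves src tgt T) S ->
  (len l T < len l S)%R.
Proof.
move=> spanS; have [_ [_ [_ [_ [_ [sct3 _]]]]]] := hT.
have [S' _ sdS'] := sd_exists l spanS.
by apply: lt_le_trans (sct3 _ sdS') _; apply: sdS'.2.
Qed.

Lemma len_tree_add_edge_lt e0 : e0 \in es C -> (len l T + l e0 < len l C)%R.
Proof.
move=> e0C; have [wC [cC _]] := hC.
suff /len_tree_lt_span :
    conn_span src tgt C (leaves src tgt T) (Subgraph (vs C) (es C :\ e0)).
  by rewrite /len (big_setD1 e0 e0C) /=; lra.
split; first by move=> e /setD1P [_ /wC].
rewrite /subg /= subsetDl subxx -hVC; do 2!split=> //.
exact: cycle_delete_edge_connected.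
Qed.

Lemma short_span_minus_vertex v : v \in vs C ->
  exists2 S, conn_span src tgt C (vs C :\ v) S & (len l S <= len l T)%R.
Proof.
move=> vC; have [wT [_ [[_ [cT _]] [_ [_ [_ sct4]]]]]] := hT.
have BL : vs C :\ v \proper leaves src tgt T by rewrite -hVC properD1.
have LT : leaves src tgt T \subset vs T by apply/subsetP => x; rewrite inE => /andP[].
have spanT : conn_span src tgt T (vs C :\ v) T.
  by split=> //; split; [split | split=> //; apply: subset_trans (proper_sub BL) LT].
have [ST _ sdST] := sd_exists l spanT.
have [x [[[S [spanS <-]] _] le_x]] := sct4 _ BL _ sdST.
by exists S => //; apply: le_trans le_x (sdST.2 T spanT).
Qed.

Lemma adjacent_edges_long e0 e1 e2 v : e0 \in es C -> e1 \in es C -> e2 \in es C ->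
  e1 != e2 -> inc src tgt e1 v -> inc src tgt e2 v -> (l e0 < l e1 + l e2)%R.
Proof.
move=> e0C e1C e2C ne12 e1v e2v; have [wC _] := hC.
have vC : v \in vs C by move: e1v; have [s t] := wC e1 e1C; case/orP => /eqP <-.
have at_v : edges_at src tgt C v = [set e1; e2].
  by apply: cycle_edges_at; rewrite ?inE ?e1C ?e2C.
have [S [wS [SC [cS BS]]] lenS] := short_span_minus_vertex vC.
have vS : v \notin vs S.
  apply/negP => vS; suff : (len l T < len l S)%R by rewrite ltNge lenS.
  apply: len_tree_lt_span; do 3!split=> //; rewrite -hVC.
  apply/subsetP => u uC; case: (eqVneq u v) => [-> //|uv].
  by apply: (subsetP BS); apply/setD1P.
have vsS : vs S = vs C :\ v.
  apply/eqP; rewrite eqEsubset BS andbT; apply/subsetP => u uS.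
  by rewrite !inE (subsetP SC.1 u uS) andbT; apply: contraNneq vS => <-.
have esS := es_cycle_minus_vertex loopless hC vC wS SC cS vsS.
have := len_tree_add_edge_lt e0C.
rewrite (len_split_edges_at l ne12 at_v) -esS -/(len l S); lra.
Qed.

Lemma edge_lt_half_len e0 : (forall e, e \in es C -> 0 < l e)%R ->
  (3 <= #|vs C|)%N -> e0 \in es C -> (l e0 < len l C / 2%:R)%R.
Proof.
move=> posC ge3 e0C; have [_ [_ degC]] := hC.
have [v] : exists v, v \in vs C :\ src e0 :\ tgt e0.
  apply/card_gt0P; move: ge3 (cardsD1 (src e0) (vs C)).
  by move: (cardsD1 (tgt e0) (vs C :\ src e0)); case: (_ \in _); case: (_ \in _); lia.
rewrite !inE => /and3P [v_tgt v_src vC].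
have /cards2P [e1 [e2 [ne12 at_v]]] : #|edges_at src tgt C v| == 2.
  by rewrite -(degC v vC).
have : e1 \in edges_at src tgt C v by rewrite at_v !inE eqxx.
have : e2 \in edges_at src tgt C v by rewrite at_v !inE eqxx orbT.
rewrite !inE => /andP [e2C e2v] /andP [e1C e1v].
have := adjacent_edges_long e0C e1C e2C ne12 e1v e2v.
have e0_off_v : e0 \in es C :\: edges_at src tgt C v.
  by rewrite !inE e0C andbT /inc negb_or eq_sym v_src eq_sym v_tgt.
have := len_split_edges_at l ne12 at_v; rewrite (big_setD1 e0 e0_off_v) /=.
have : (0 <= \sum_(e in es C :\: edges_at src tgt C v :\ e0) l e)%R.
  by apply: sumr_ge0 => e /setD1P [_ /setDP [/posC /ltW]].
lra.
Qed.

End ShortcutCycle.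

Unset Implicit Arguments.

Theorem lemma5p4 (R : realFieldType) (V E : finType) (src tgt : E -> V)
  (loopless : forall e, src e != tgt e)
  (T C : subgraph V E) (l : E -> R)
  (lpos : forall e, e \in es T :|: es C -> (0 < l e)%R)
  (hC : is_cycle src tgt C)
  (hT : shortcut_tree src tgt l T C)
  (hVC : vs C = leaves src tgt T)
  (h3 : (3 <= #|leaves src tgt T|)%N)
  (hdeg : forall v, v \in vs T -> deg src tgt T v != 2%N)
  (e0 : E) (he0 : e0 \in es C) :
  (forall e1 e2, e1 \in es C -> e2 \in es C -> e1 != e2 ->
     (exists v, inc src tgt e1 v && inc src tgt e2 v) ->
     (l e0 < l e1 + l e2)%R)
  /\ (l e0 < len l C / 2%:R)%R.
Proof.
split.
  move=> e1 e2 e1C e2C ne12 [v /andP [e1v e2v]].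
  exact: (adjacent_edges_long loopless hC hT hVC he0 e1C e2C ne12 e1v e2v).
apply: (edge_lt_half_len loopless hC hT hVC) he0.
- by move=> e eC; apply: lpos; rewrite inE eC orbT.
- by rewrite hVC.
Qed.
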